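(* Let $\rho_1,\dots,\rho_N$ be pairwise orthogonal density operators on $\mathbb C^2\otimes\mathbb C^n$, shared by Alice (holding the qubit $\mathbb C^2$) and Bob (holding $\mathbb C^n$). Consider LOCC protocols in which Alice goes first. Then there is such a protocol that perfectly discriminates $\rho_1,\dots,\rho_N$ if and only if there exists an orthonormal basis $\{|0\rangle,|1\rangle\}$ of Alice's space $\mathbb C^2$ such that for every $k$ and every $|\psi_k\rangle\in\mathrm{Supp}(\rho_k)$, writing $$|\psi_k\rangle=|0\rangle_A|\psi_0^{(k)}\rangle_B+|1\rangle_A|\psi_1^{(k)}\rangle_B,$$ one has $\langle\psi_0^{(k)}|\psi_0^{(l)}\rangle=\langle\psi_1^{(k)}|\psi_1^{(l)}\rangle=0$ for all $k\neq l$ and all choices $|\psi_k\rangle\in\mathrm{Supp}(\rho_k)$, $|\psi_l\rangle\in\mathrm{Supp}(\rho_l)$.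
   Context: $\mathrm{Supp}(\rho)$ is the span of the eigenvectors of $\rho$ with positive eigenvalues. Density operators are orthogonal if $\mathrm{tr}(\rho_k\rho_l)=0$. A set of states is perfectly discriminated by an LOCC protocol (finitely many rounds, in each of which one party performs a local measurement and broadcasts the outcome) if, whichever state of the set is given, the protocol outputs its correct index with probability 1. A measurement operator $M$ is trivial if $M^\dagger M$ is proportional to the identity; a measurement is non-trivial if at least one of its operators is not trivial. ''Alice goes first'' means Alice is the party performing the first non-trivial measurement of the protocol. *)

From HB Require Import structures.
From mathcomp Require Import all_boot all_order all_algebra.
Set Implicit Arguments. Unset Strict Implicit. Unset Printing Implicit Defensive.
Import Order.TTheory GRing.Theory Num.Theory.
Local Open Scope ring_scope.

Section QI.
Variable C : numClosedFieldType.

Definition dag m n (A : 'M[C]_(m, n)) : 'M[C]_(n, m) := (map_mx Num.conj A)^T.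

Definition idx_pair m n (k : 'I_(m * n)) : 'I_m * 'I_n :=
  enum_val (cast_ord (esym (mxvec_cast m n)) k).

Definition kron m1 n1 m2 n2 (A : 'M[C]_(m1, n1)) (B : 'M[C]_(m2, n2))
  : 'M[C]_(m1 * m2, n1 * n2) :=
  \matrix_(i, j) (A (idx_pair i).1 (idx_pair j).1 * B (idx_pair i).2 (idx_pair j).2).

Definition psd d (A : 'M[C]_d) : Prop :=
  dag A = A /\ forall v : 'cV[C]_d, 0 <= (dag v *m A *m v) 0 0.

Definition density d (rho : 'M[C]_d) : Prop := psd rho /\ \tr rho = 1.

Definition in_supp d (rho : 'M[C]_d) (psi : 'cV[C]_d) : Prop :=
  exists (m : nat) (vs : 'I_m -> 'cV[C]_d) (cs : 'I_m -> C),
    (forall i, exists lam : C, 0 < lam /\ rho *m vs i = lam *: vs i) /\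
    psi = \sum_(i < m) cs i *: vs i.

Definition trivial_op d (M : 'M[C]_d) : Prop := exists c : C, dag M *m M = c%:M.

(* finite-round LOCC protocols on C^2 (Alice) (x) C^n (Bob), outputting an
   index in 'I_N.  Each node is a local measurement (one operator per
   outcome) whose outcome is broadcast; the continuation depends on it. *)
Inductive protocol (n N : nat) : Type :=
| Output : 'I_N -> protocol n N
| MeasA : forall m : nat, ('I_m -> 'M[C]_2) -> ('I_m -> protocol n N) -> protocol n N
| MeasB : forall m : nat, ('I_m -> 'M[C]_n) -> ('I_m -> protocol n N) -> protocol n N.

Fixpoint valid n N (P : protocol n N) : Prop :=
  match P with
  | Output _ => True
  | MeasA m K next => \sum_(i < m) dag (K i) *m K i = 1%:M /\ forall i, valid (next i)
  | MeasB m K next => \sum_(i < m) dag (K i) *m K i = 1%:M /\ forall i, valid (next i)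
  end.

Definition nontrivial_meas d m (K : 'I_m -> 'M[C]_d) : Prop :=
  exists i, ~ trivial_op (K i).

(* Alice performs the first non-trivial measurement of the protocol
   (on every branch); a protocol with no non-trivial measurement at all
   is accepted as well. *)
Fixpoint alice_first n N (P : protocol n N) : Prop :=
  match P with
  | Output _ => True
  | MeasA m K next => nontrivial_meas K \/ forall i, alice_first (next i)
  | MeasB m K next => ~ nontrivial_meas K /\ forall i, alice_first (next i)
  end.

(* Running P on the (unnormalised) state rho, every leaf reached with
   nonzero probability (= trace of the unnormalised post-measurement state)
   outputs k. *)
Fixpoint outputs_correctly n N (P : protocol n N) (rho : 'M[C]_(2 * n)) (k : 'I_N)
  : Prop :=
  match P with
  | Output j => \tr rho = 0 \/ j = k
  | MeasA m K next => forall i,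
      outputs_correctly (next i)
        (kron (K i) (1%:M : 'M[C]_n) *m rho *m dag (kron (K i) (1%:M : 'M[C]_n))) k
  | MeasB m K next => forall i,
      outputs_correctly (next i)
        (kron (1%:M : 'M[C]_2) (K i) *m rho *m dag (kron (1%:M : 'M[C]_2) (K i))) k
  end.

Definition perfectly_discriminates n N (P : protocol n N)
  (rho : 'I_N -> 'M[C]_(2 * n)) : Prop :=
  valid P /\ forall k, outputs_correctly P (rho k) k.

End QI.

From Pilot Require Import Defs.
From HB Require Import structures.
From Stdlib Require Import Classical.
From mathcomp Require Import all_boot all_order all_algebra.
Set Implicit Arguments. Unset Strict Implicit. Unset Printing Implicit Defensive.
Import Order.TTheory GRing.Theory Num.Theory.
Local Open Scope ring_scope.

(* Every density operator factors as rho_k = T_k T_k^dag, and Supp(rho_k) is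
   the range of rho_k.  Write <u|_A for the partial bra (<u| (x) 1) of an
   Alice vector u; the components of psi in an Alice basis {u0, u1} are then
   <u0|_A psi and <u1|_A psi.  The theorem reduces to the condition

       T_k^dag (u u^dag (x) 1) T_l = 0   for k <> l and u in {u0, u1}   (BO)

   ("block orthogonality" of the T_k along u).
   - Necessity: a complete measurement preserves orthogonality of branches,
     so correctly discriminated states satisfy T_k^dag T_l = 0, also after
     any measurement outcome.  By induction on the protocol, the first
     non-trivial measurement of Alice, K_i, yields (BO) for the eigenbasis of
     the non-scalar Hermitian K_i^dag K_i; trivial measurements before it are
     proportional to unitaries and only transport the basis.
   - Sufficiency: Alice measures in the basis {u0, u1}; given her outcome b,
     the ranges of <u_b|_A rho_k are mutually orthogonal, so Bob projects
     onto them and announces k. *)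

Section Adjoint.
Variable C : numClosedFieldType.

Lemma dagE m n (A : 'M[C]_(m, n)) i j : dag A i j = (A j i)^*.
Proof. by rewrite /Defs.dag !mxE. Qed.

Lemma dagK m n (A : 'M[C]_(m, n)) : dag (dag A) = A.
Proof. by apply/matrixP=> i j; rewrite !dagE conjCK. Qed.

Lemma dag_mul m n p (A : 'M[C]_(m, n)) (B : 'M[C]_(n, p)) :
  dag (A *m B) = dag B *m dag A.
Proof.
apply/matrixP=> i j; rewrite dagE !mxE rmorph_sum; apply: eq_bigr => k _.
by rewrite !dagE rmorphM mulrC.
Qed.

Lemma dagB m n (A B : 'M[C]_(m, n)) : dag (A - B) = dag A - dag B.
Proof. by apply/matrixP=> i j; rewrite !(dagE, mxE) rmorphB. Qed.

Lemma dagZ m n a (A : 'M[C]_(m, n)) : dag (a *: A) = a^* *: dag A.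
Proof. by apply/matrixP=> i j; rewrite !(dagE, mxE) rmorphM. Qed.

Lemma dag0 m n : dag (0 : 'M[C]_(m, n)) = 0.
Proof. by apply/matrixP=> i j; rewrite !(dagE, mxE) rmorph0. Qed.

Lemma dag_sum m n I (r : seq I) (P : pred I) (F : I -> 'M[C]_(m, n)) :
  dag (\sum_(i <- r | P i) F i) = \sum_(i <- r | P i) dag (F i).
Proof.
apply/matrixP=> i j; rewrite dagE !summxE rmorph_sum; apply: eq_bigr => k _.
by rewrite dagE.
Qed.

Lemma dag_scalar n a : dag (a%:M : 'M[C]_n) = a^*%:M.
Proof.
apply/matrixP=> i j; rewrite dagE !mxE (eq_sym j i).
by case: (i == j); rewrite ?mulr1n ?mulr0n ?rmorph0.
Qed.

Lemma dag1 n : dag (1%:M : 'M[C]_n) = 1%:M.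
Proof. by rewrite dag_scalar rmorph1. Qed.

Lemma dag_diag n (d : 'rV[C]_n) : dag (diag_mx d) = diag_mx (map_mx Num.conj d).
Proof.
apply/matrixP=> i j; rewrite dagE !mxE (eq_sym j i).
by case: eqP => [->|]; rewrite ?mulr1n ?mulr0n ?rmorph0.
Qed.

Lemma dag_delta n (i : 'I_n) : dag (delta_mx i 0 : 'cV[C]_n) = delta_mx 0 i.
Proof.
apply/matrixP=> a b; rewrite dagE !mxE.
by case: (b == i); case: (a == 0); rewrite ?rmorph1 ?rmorph0.
Qed.

Lemma dag_trmxE m n (A : 'M[C]_(m, n)) : dag A = map_mx Num.conj (A^T).
Proof. by apply/matrixP=> i j; rewrite dagE !mxE. Qed.

Lemma dag_row_mx m n1 n2 (A : 'M[C]_(m, n1)) (B : 'M[C]_(m, n2)) :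
  dag (row_mx A B) = col_mx (dag A) (dag B).
Proof. by rewrite !dag_trmxE tr_row_mx map_col_mx. Qed.

Lemma dag_orth_sym m n p (A : 'M[C]_(m, n)) (B : 'M[C]_(m, p)) :
  dag A *m B = 0 -> dag B *m A = 0.
Proof. by move=> H; rewrite -[A]dagK -dag_mul H dag0. Qed.

End Adjoint.

(* Kronecker products, indexed through the bijection 'I_(m * n) ~ 'I_m * 'I_n. *)
Section Kronecker.
Variable C : numClosedFieldType.

Lemma idx_pairK m n (i : 'I_m) (j : 'I_n) : idx_pair (mxvec_index i j) = (i, j).
Proof. by rewrite /idx_pair /mxvec_index cast_ordK enum_rankK. Qed.

Lemma sum_idx (R : nmodType) m n (F : 'I_(m * n) -> R) :
  \sum_k F k = \sum_i \sum_j F (mxvec_index i j).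
Proof.
rewrite pair_big /= (reindex (fun p : 'I_m * 'I_n => mxvec_index p.1 p.2)) //.
exists (@idx_pair m n) => [p _|k _]; first by rewrite idx_pairK; case: p.
by case/mxvec_indexP: k => i j; rewrite idx_pairK.
Qed.

Lemma kronE m1 n1 m2 n2 (A : 'M[C]_(m1, n1)) (B : 'M[C]_(m2, n2)) i1 i2 j1 j2 :
  kron A B (mxvec_index i1 i2) (mxvec_index j1 j2) = A i1 j1 * B i2 j2.
Proof. by rewrite /Defs.kron mxE !idx_pairK. Qed.

Lemma kron_matrixP m1 m2 n1 n2 (X Y : 'M[C]_(m1 * m2, n1 * n2)) :
  (forall i1 i2 j1 j2, X (mxvec_index i1 i2) (mxvec_index j1 j2)
                       = Y (mxvec_index i1 i2) (mxvec_index j1 j2)) -> X = Y.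
Proof.
move=> H; apply/matrixP=> i j.
by case/mxvec_indexP: i => i1 i2; case/mxvec_indexP: j => j1 j2.
Qed.

Lemma kron_mul m1 n1 p1 m2 n2 p2 (A : 'M[C]_(m1, n1)) (B : 'M[C]_(m2, n2))
   (A' : 'M[C]_(n1, p1)) (B' : 'M[C]_(n2, p2)) :
  kron A B *m kron A' B' = kron (A *m A') (B *m B').
Proof.
apply: kron_matrixP => i1 i2 j1 j2.
rewrite kronE !mxE sum_idx big_distrl /=; apply: eq_bigr => k1 _.
rewrite big_distrr /=; apply: eq_bigr => k2 _.
by rewrite !kronE mulrACA.
Qed.

Lemma dag_kron m1 n1 m2 n2 (A : 'M[C]_(m1, n1)) (B : 'M[C]_(m2, n2)) :
  dag (kron A B) = kron (dag A) (dag B).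
Proof. by apply: kron_matrixP => i1 i2 j1 j2; rewrite dagE !kronE !dagE rmorphM. Qed.

Lemma kron11 m n : kron (1%:M : 'M[C]_m) (1%:M : 'M[C]_n) = 1%:M.
Proof.
apply: kron_matrixP => i1 i2 j1 j2; rewrite kronE !mxE.
have -> : (mxvec_index i1 i2 == mxvec_index j1 j2) = (i1 == j1) && (i2 == j2).
  apply/eqP/andP => [E|[/eqP-> /eqP->]] //.
  by have := idx_pairK i1 i2; rewrite E idx_pairK => -[-> ->].
by case: (i1 == j1); case: (i2 == j2); rewrite ?mulr1n ?mulr0n ?mulr1 ?mulr0.
Qed.

Lemma kronDl m1 n1 m2 n2 (A A' : 'M[C]_(m1, n1)) (B : 'M[C]_(m2, n2)) :
  kron (A + A') B = kron A B + kron A' B.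
Proof. by apply: kron_matrixP => i1 i2 j1 j2; rewrite !(kronE, mxE) mulrDl. Qed.

Lemma kronBl m1 n1 m2 n2 (A A' : 'M[C]_(m1, n1)) (B : 'M[C]_(m2, n2)) :
  kron (A - A') B = kron A B - kron A' B.
Proof. by apply: kron_matrixP => i1 i2 j1 j2; rewrite !(kronE, mxE) mulrBl. Qed.

Lemma kronZl m1 n1 m2 n2 a (A : 'M[C]_(m1, n1)) (B : 'M[C]_(m2, n2)) :
  kron (a *: A) B = a *: kron A B.
Proof. by apply: kron_matrixP => i1 i2 j1 j2; rewrite !(kronE, mxE) mulrA. Qed.

Lemma kronZr m1 n1 m2 n2 a (A : 'M[C]_(m1, n1)) (B : 'M[C]_(m2, n2)) :
  kron A (a *: B) = a *: kron A B.
Proof. by apply: kron_matrixP => i1 i2 j1 j2; rewrite !(kronE, mxE) mulrCA. Qed.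

Lemma kron_suml m1 n1 m2 n2 I (r : seq I) (P : pred I) (F : I -> 'M[C]_(m1, n1))
  (B : 'M[C]_(m2, n2)) :
  kron (\sum_(i <- r | P i) F i) B = \sum_(i <- r | P i) kron (F i) B.
Proof.
elim/big_rec2: _ => [|i x y _ <-]; last by rewrite kronDl.
by apply: kron_matrixP => i1 i2 j1 j2; rewrite !(kronE, mxE) mul0r.
Qed.

Lemma kron_sumr m1 n1 m2 n2 I (r : seq I) (P : pred I) (F : I -> 'M[C]_(m2, n2))
  (A : 'M[C]_(m1, n1)) :
  kron A (\sum_(i <- r | P i) F i) = \sum_(i <- r | P i) kron A (F i).
Proof.
elim/big_rec2: _ => [|i0 x y _ <-].
  by apply: kron_matrixP => i1 i2 j1 j2; rewrite !(kronE, mxE) mulr0.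
by apply: kron_matrixP => i1 i2 j1 j2; rewrite !(kronE, mxE) mulrDr.
Qed.

End Kronecker.

(* The partial bra <u|_A = <u| (x) 1_n, mapping C^m (x) C^n to Bob's C^n. *)
Section PartialBra.
Variable C : numClosedFieldType.

Lemma sum_id_mulr n (F : 'I_n -> C) j : \sum_r F r * (1%:M : 'M[C]_n) r j = F j.
Proof.
rewrite (bigD1 j) //= big1 => [|r /negbTE rj]; first by rewrite mxE eqxx mulr1 addr0.
by rewrite mxE rj mulr0.
Qed.

Lemma sum_id_mull n (F : 'I_n -> C) j : \sum_r (1%:M : 'M[C]_n) j r * F r = F j.
Proof.
rewrite (bigD1 j) //= big1 => [|r rj]; first by rewrite mxE eqxx mul1r addr0.
by rewrite mxE eq_sym (negbTE rj) mul0r.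
Qed.

Lemma sum_id_mull' n (F : 'I_n -> C) j : \sum_r (1%:M : 'M[C]_n) r j * F r = F j.
Proof.
rewrite (bigD1 j) //= big1 => [|r /negbTE rj]; first by rewrite mxE eqxx mul1r addr0.
by rewrite mxE rj mul0r.
Qed.

Definition pbra m n (u : 'cV[C]_m) : 'M[C]_(n, m * n) :=
  \matrix_(r, c) ((u (idx_pair c).1 0)^* * (1%:M : 'M[C]_n) r (idx_pair c).2).

Lemma pbraE m n (u : 'cV[C]_m) r i1 i2 :
  pbra n u r (mxvec_index i1 i2) = (u i1 0)^* * (1%:M : 'M[C]_n) r i2.
Proof. by rewrite mxE idx_pairK. Qed.

Lemma dag_pbraE m n (u : 'cV[C]_m) r i1 i2 :
  dag (pbra n u) (mxvec_index i1 i2) r = u i1 0 * (1%:M : 'M[C]_n) i2 r.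
Proof.
rewrite dagE pbraE rmorphM /= conjCK; congr (_ * _).
by rewrite !mxE (eq_sym i2 r); case: (r == i2); rewrite ?rmorph1 ?rmorph0.
Qed.

Lemma pket_vec m n (u : 'cV[C]_m) (a : 'cV[C]_n) :
  dag (pbra n u) *m a = kron u a :> 'M_(m * n, 1).
Proof.
apply/matrixP=> i j; case/mxvec_indexP: i => i1 i2; rewrite !ord1 mxE.
have -> : kron u a (mxvec_index i1 i2) 0 = kron u a (mxvec_index i1 i2) (mxvec_index 0 0).
  by congr (kron u a _ _); apply/val_inj; case: (mxvec_index _ _) => -[].
rewrite kronE (eq_bigr (fun r => (1%:M : 'M[C]_n) i2 r * (u i1 0 * a r 0))).
  by rewrite sum_id_mull.
by move=> r _; rewrite dag_pbraE [u i1 0 * _]mulrC -mulrA.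
Qed.

Lemma pbra_pket m n (u v : 'cV[C]_m) :
  pbra n v *m dag (pbra n u) = ((dag v *m u) 0 0)%:M.
Proof.
apply/matrixP=> r s; rewrite mxE sum_idx.
have -> : \sum_i \sum_j pbra n v r (mxvec_index i j) * dag (pbra n u) (mxvec_index i j) s
  = \sum_i (v i 0)^* * u i 0 * (1%:M : 'M[C]_n) r s.
  apply: eq_bigr => i _; rewrite (eq_bigr (fun j => ((v i 0)^* * u i 0) *
      ((1%:M : 'M[C]_n) r j * (1%:M : 'M[C]_n) j s))).
    by rewrite -big_distrr /= sum_id_mull.
  by move=> j _; rewrite pbraE dag_pbraE mulrACA.
rewrite -big_distrl /= [in RHS]mxE [in LHS]mxE mulr_natr; congr (_ *+ _).
by rewrite mxE; apply: eq_bigr => i _; rewrite dagE.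
Qed.

Lemma pket_pbra m n (u v : 'cV[C]_m) :
  dag (pbra n u) *m pbra n v = kron (u *m dag v) (1%:M : 'M[C]_n).
Proof.
apply: kron_matrixP => i1 i2 j1 j2; rewrite kronE !mxE big_ord1 dagE.
rewrite (eq_bigr (fun r => (u i1 0 * (v j1 0)^*) *
   ((1%:M : 'M[C]_n) i2 r * (1%:M : 'M[C]_n) r j2))).
  by rewrite -big_distrr /= sum_id_mull mxE.
by move=> r _; rewrite dag_pbraE pbraE mulrACA.
Qed.

Lemma pbra_kron1 m n (u : 'cV[C]_m) (K : 'M[C]_n) :
  pbra n u *m kron (1%:M : 'M[C]_m) K = K *m pbra n u.
Proof.
apply/matrixP=> r j; case/mxvec_indexP: j => j1 j2; rewrite !mxE sum_idx.
rewrite (eq_bigr (fun i1 => (1%:M : 'M[C]_m) i1 j1 * ((u i1 0)^* * K r j2))).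
  rewrite sum_id_mull' (eq_bigr (fun s => ((u j1 0)^* * K r s) * (1%:M : 'M[C]_n) s j2)).
    by rewrite sum_id_mulr.
  by move=> s _; rewrite pbraE mulrCA mulrA.
move=> i1 _; rewrite (eq_bigr (fun i2 => ((u i1 0)^* * (1%:M : 'M[C]_m) i1 j1) *
   ((1%:M : 'M[C]_n) r i2 * K i2 j2))).
  by rewrite -big_distrr /= sum_id_mull mulrCA mulrA.
by move=> i2 _; rewrite pbraE kronE mulrACA.
Qed.

Lemma pbra_kron m n (u v : 'cV[C]_m) (a : 'cV[C]_n) :
  pbra n v *m kron u a = ((dag v *m u) 0 0) *: a.
Proof. by rewrite -pket_vec mulmxA pbra_pket mul_scalar_mx. Qed.

End PartialBra.

Section Spectral.
Variable C : numClosedFieldType.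

Lemma gram_tr_eq0 m n (X : 'M[C]_(m, n)) : \tr (X *m dag X) = 0 -> X = 0.
Proof.
have sq0 (F : 'I_n -> C) : \sum_j F j * (F j)^* = 0 -> forall j, F j = 0.
  move=> H j; apply/eqP; rewrite -mul_conjC_eq0; apply/eqP.
  by apply: (psumr_eq0P _ H) => // k _; apply: mul_conjC_ge0.
move=> H; have Hd k : (X *m dag X) k k = 0.
  apply: (psumr_eq0P _ H) => // l _; rewrite mxE sumr_ge0 // => r _.
  by rewrite dagE mul_conjC_ge0.
apply/matrixP=> a b; rewrite [RHS]mxE; apply: (sq0 (fun j => X a j)).
by apply: etrans (Hd a); rewrite mxE; apply: eq_bigr => k _; rewrite dagE.
Qed.

Lemma gram_eq0 m n (X : 'M[C]_(m, n)) : X *m dag X = 0 -> X = 0.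
Proof. by move=> H; apply: gram_tr_eq0; rewrite H mxtrace0. Qed.

Lemma herm_spec n (A : 'M[C]_n) : dag A = A ->
  exists (M : 'M[C]_n) (d : 'rV[C]_n),
    [/\ M *m dag M = 1%:M, dag M *m M = 1%:M & A = dag M *m diag_mx d *m M].
Proof.
move=> HA; have Ah : A \is hermsymmx.
  by apply/is_hermitianmxP; rewrite expr0 scale1r -dag_trmxE.
have /orthomx_spectralP E := hermitian_normalmx Ah.
have U := spectral_unitarymx A.
have U1 : spectralmx A *m dag (spectralmx A) = 1%:M.
  by rewrite dag_trmxE; apply/unitarymxP.
exists (spectralmx A), (spectral_diag A); split => //; first exact: mulmx1C.
by rewrite {1}E invmx_unitary // -dag_trmxE.
Qed.

Lemma diag_delta n (d : 'rV[C]_n) i :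
  diag_mx d *m delta_mx i 0 = d 0 i *: (delta_mx i 0 : 'cV[C]_n).
Proof.
apply/matrixP=> a b; rewrite mul_diag_mx !mxE.
by case: eqP => [->|]; rewrite ?mulr1 ?mulr0 //; case: (b == 0); rewrite ?mulr0.
Qed.

Lemma psd_spec n (A : 'M[C]_n) : psd A ->
  exists (M : 'M[C]_n) (d : 'rV[C]_n),
    [/\ M *m dag M = 1%:M, A = dag M *m diag_mx d *m M & forall i, 0 <= d 0 i].
Proof.
move=> [HA Hpos]; have [M [d [U1 U2 E]]] := herm_spec HA.
exists M, d; split => // i; have := Hpos (dag M *m delta_mx i 0).
rewrite dag_mul dagK E !mulmxA -[dag (delta_mx i 0) *m M *m dag M]mulmxA U1 mulmx1.
by rewrite -(mulmxA _ M) U1 mulmx1 dag_delta -rowE -colE !mxE eqxx mulr1n.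
Qed.

Lemma psd_factor n (A : 'M[C]_n) : psd A -> exists T : 'M[C]_n, A = T *m dag T.
Proof.
move=> /psd_spec [M [d [U1 E Hd]]].
exists (dag M *m diag_mx (\row_i sqrtC (d 0 i))).
rewrite dag_mul dagK dag_diag -!mulmxA (mulmxA (diag_mx _)) mulmx_diag E -!mulmxA.
congr (_ *m (_ *m _)); congr diag_mx; apply/rowP=> i; rewrite !mxE.
by rewrite geC0_conj ?sqrtC_ge0 // -expr2 sqrtCK.
Qed.

Lemma in_supp_range n (A : 'M[C]_n) (w : 'cV[C]_n) : psd A -> in_supp A (A *m w).
Proof.
move=> /psd_spec [M [d [U1 E Hd]]].
pose ev i : 'cV[C]_n := if d 0 i != 0 then dag M *m delta_mx i 0 else 0.
exists n, ev, (fun i => d 0 i * (M *m w) i 0); split.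
  move=> i; rewrite /ev; case: ifP => [nz|_]; last by exists 1; rewrite ltr01 mulmx0 scaler0.
  exists (d 0 i); split; first by rewrite lt_def nz Hd.
  by rewrite E -!mulmxA (mulmxA M) U1 mul1mx diag_delta -scalemxAr.
have -> : \sum_(i < n) (d 0 i * (M *m w) i 0) *: ev i
   = dag M *m \sum_(i < n) (d 0 i * (M *m w) i 0) *: delta_mx i 0.
  rewrite mulmx_sumr; apply: eq_bigr => i _; rewrite /ev -scalemxAr.
  by case: ifP => // /negbFE/eqP ->; rewrite mul0r !scale0r.
rewrite E -!mulmxA; congr (_ *m _); rewrite [LHS]matrix_sum_delta.
by apply: eq_bigr => i _; rewrite big_ord1 mul_diag_mx mxE.
Qed.

Lemma in_supp_inv n (A : 'M[C]_n) psi : in_supp A psi -> exists w, psi = A *m w.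
Proof.
move=> [m [vs [cs [Hv ->]]]].
have /fin_all_exists [ws Hws] : forall i, exists w, vs i = A *m w.
  move=> i; have [lam [lam0 Hl]] := Hv i.
  exists (lam^-1 *: vs i); rewrite -scalemxAr Hl scalerA mulVf ?scale1r //.
  by rewrite gt_eqF.
exists (\sum_i cs i *: ws i); rewrite mulmx_sumr; apply: eq_bigr => i _.
by rewrite Hws scalemxAr.
Qed.

(* The orthogonal projection Q onto the range of B: Q = B Z, Q = Q^dag = Q^2,
   Q B = B.  Built from the spectral decomposition of B B^dag. *)
Lemma range_projection n p (B : 'M[C]_(n, p)) :
  exists (Q : 'M[C]_n) (Z : 'M[C]_(p, n)),
    [/\ Q = B *m Z, dag Q = Q, Q *m Q = Q & Q *m B = B].
Proof.
have [M [d [U1 U2 E]]] : exists (M : 'M[C]_n) (d : 'rV[C]_n),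
    [/\ M *m dag M = 1%:M, dag M *m M = 1%:M & B *m dag B = dag M *m diag_mx d *m M].
  by apply: herm_spec; rewrite dag_mul dagK.
pose e := \row_i ((d 0 i != 0)%:R : C).
pose di := \row_i (d 0 i)^-1.
have conj_diag (a b : 'rV[C]_n) : (dag M *m diag_mx a *m M) *m (dag M *m diag_mx b *m M)
    = dag M *m diag_mx (\row_j (a 0 j * b 0 j)) *m M.
  by rewrite !mulmxA -(mulmxA _ M (dag M)) U1 mulmx1 -(mulmxA _ (diag_mx a)) mulmx_diag.
pose Q := dag M *m diag_mx e *m M.
have QH : dag Q = Q.
  rewrite /Q !dag_mul dagK dag_diag mulmxA; congr (_ *m _ *m _).
  by congr diag_mx; apply/rowP=> j; rewrite !mxE rmorph_nat.
exists Q, (dag B *m (dag M *m diag_mx di *m M)); split => //.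
- rewrite mulmxA E conj_diag /Q; congr (_ *m diag_mx _ *m _); apply/rowP=> j.
  by rewrite !mxE; case: eqP => [->|/eqP nz]; rewrite ?mul0r ?mulfV.
- rewrite /Q conj_diag; congr (_ *m diag_mx _ *m _); apply/rowP=> j.
  by rewrite !mxE; case: (d 0 j != 0); rewrite ?mulr1 ?mulr0.
have QG : Q *m (B *m dag B) = B *m dag B.
  rewrite E conj_diag; congr (_ *m diag_mx _ *m _); apply/rowP=> j.
  by rewrite !mxE; case: eqP => [->|]; rewrite ?mulr0 ?mul1r.
have R0 : (1%:M - Q) *m B = 0.
  apply: gram_eq0; rewrite dag_mul mulmxA -(mulmxA _ B) [_ *m (B *m _)]mulmxBl.
  by rewrite mul1mx QG subrr mul0mx.
by apply/eqP; rewrite eq_sym -subr_eq0 -[X in X - _]mul1mx -mulmxBl R0.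
Qed.

End Spectral.

Section Qubit.
Variable C : numClosedFieldType.

Lemma ord2_cases (i : 'I_2) : i = 0 \/ i = 1.
Proof. by case: i => -[|[|]] //= H; [left|right]; apply/val_inj. Qed.

Definition orthonormal2 (u0 u1 : 'cV[C]_2) : Prop :=
  dag u0 *m u0 = 1%:M /\ dag u1 *m u1 = 1%:M /\ dag u0 *m u1 = 0.

Lemma unit_projector m (v : 'cV[C]_m) :
  dag v *m v = 1%:M -> dag (v *m dag v) *m (v *m dag v) = v *m dag v.
Proof. by move=> Ev; rewrite dag_mul dagK mulmxA -(mulmxA v) Ev mulmx1. Qed.

Lemma orthonormal2_complete (u0 u1 : 'cV[C]_2) :
  orthonormal2 u0 u1 -> u0 *m dag u0 + u1 *m dag u1 = 1%:M.
Proof.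
move=> [H0 [H1 H01]]; have H10 := dag_orth_sym H01.
have HU : dag (row_mx u0 u1) *m row_mx u0 u1 = 1%:M.
  by rewrite dag_row_mx mul_col_row H0 H1 H01 H10 -scalar_mx_block.
have HU' : dag (row_mx u0 u1 : 'M[C]_2) *m (row_mx u0 u1 : 'M[C]_2) = 1%:M := HU.
have HU2 : row_mx u0 u1 *m dag (row_mx u0 u1) = 1%:M := mulmx1C HU'.
by move: HU2; rewrite dag_row_mx mul_row_col.
Qed.

Lemma orthonormal2_decomp n (u0 u1 : 'cV[C]_2) (psi : 'cV[C]_(2 * n)) :
  orthonormal2 u0 u1 -> psi = kron u0 (pbra n u0 *m psi) + kron u1 (pbra n u1 *m psi).
Proof.
move=> /orthonormal2_complete H.
by rewrite -!pket_vec !mulmxA -mulmxDl !pket_pbra -kronDl H kron11 mul1mx.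
Qed.

Lemma orthonormal2_coord n (u0 u1 : 'cV[C]_2) (a b : 'cV[C]_n) :
  orthonormal2 u0 u1 ->
  pbra n u0 *m (kron u0 a + kron u1 b) = a /\ pbra n u1 *m (kron u0 a + kron u1 b) = b.
Proof.
move=> [E0 [E1 O]]; rewrite !mulmxDr !pbra_kron E0 E1 O (dag_orth_sym O) !mxE /=.
by rewrite !scale1r !scale0r addr0 add0r.
Qed.

Lemma dag_vec_eq0 m (u : 'cV[C]_m) : (dag u *m u == 0) = (u == 0).
Proof.
apply/idP/idP => [/eqP H|/eqP ->]; last by rewrite mulmx0.
have : dag u = 0 by apply: gram_eq0; rewrite dagK H.
by move=> /(congr1 (@dag _ _ _)); rewrite dagK dag0 => ->.
Qed.

Lemma normalize (u : 'cV[C]_2) : u != 0 -> exists s : C, dag (s *: u) *m (s *: u) = 1%:M.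
Proof.
move=> un0; pose q := (dag u *m u) 0 0.
have qE : dag u *m u = q%:M by apply/matrixP=> i j; rewrite !ord1 [RHS]mxE eqxx mulr1n.
have q0 : q != 0.
  apply: contraNneq un0 => q0; rewrite -dag_vec_eq0 qE q0.
  by apply/eqP/matrixP=> i j; rewrite !mxE mul0rn.
have qpos : 0 < q.
  rewrite lt_def q0 /q mxE sumr_ge0 // => j _; by rewrite dagE mulrC mul_conjC_ge0.
have sq : 0 < sqrtC q by rewrite sqrtC_gt0.
exists (sqrtC q)^-1.
rewrite dagZ -scalemxAl -scalemxAr qE scalerA scale_scalar_mx.
rewrite geC0_conj ?invr_ge0 ?ltW // -invrM ?unitfE ?gt_eqF // -expr2 sqrtCK.
by rewrite mulVf.
Qed.

Lemma delta_neq0 m (i : 'I_m) : (delta_mx i 0 : 'cV[C]_m) != 0.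
Proof.
apply/eqP => /matrixP/(_ i 0); rewrite !mxE !eqxx /= => /eqP; by rewrite oner_eq0.
Qed.

(* Any orthogonal pair works when the (BO) conditions hold vacuously. *)
Lemma std_basis : exists u0 u1 : 'cV[C]_2, [/\ u0 != 0, u1 != 0 & dag u0 *m u1 = 0].
Proof.
exists (delta_mx 0 0), (delta_mx 1 0); split; rewrite ?delta_neq0 //.
by rewrite dag_delta mul_delta_mx_cond /= mulr0n.
Qed.

Lemma nonscalar_eigenbasis (E : 'M[C]_2) : dag E = E -> ~ (exists c, E = c%:M) ->
  exists (u0 u1 : 'cV[C]_2) (a0 c0 a1 c1 : C),
   [/\ u0 != 0, u1 != 0, dag u0 *m u1 = 0,
      u0 *m dag u0 = a0 *: (E - c0 *: 1%:M) & u1 *m dag u1 = a1 *: (E - c1 *: 1%:M)].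
Proof.
move=> HE NT; have [M [d [U1 U2 Ee]]] := herm_spec HE.
pose u (b : 'I_2) := dag M *m (delta_mx b 0 : 'cV[C]_2).
have Pu b : u b *m dag (u b) = dag M *m delta_mx b b *m M.
  rewrite /u dag_mul dagK dag_delta !mulmxA -(mulmxA _ (delta_mx b 0)).
  by rewrite mul_delta_mx.
have diag2 : diag_mx d = d 0 0 *: delta_mx 0 0 + d 0 1 *: delta_mx 1 1.
  apply/matrixP=> i j; rewrite !mxE.
  by case: (ord2_cases i) => ->; case: (ord2_cases j) => ->; rewrite ?mxE /=
    ?mulr1 ?mulr0 ?addr0 ?add0r ?mulr1n ?mulr0n.
have id2 : (1%:M : 'M[C]_2) = delta_mx 0 0 + delta_mx 1 1.
  apply/matrixP=> i j; rewrite !mxE.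
  by case: (ord2_cases i) => ->; case: (ord2_cases j) => ->; rewrite /= ?addr0 ?add0r.
have Esum : E = d 0 0 *: (u 0 *m dag (u 0)) + d 0 1 *: (u 1 *m dag (u 1)).
  by rewrite !Pu Ee diag2 mulmxDr mulmxDl -!scalemxAr -!scalemxAl.
have Isum : (1%:M : 'M[C]_2) = u 0 *m dag (u 0) + u 1 *m dag (u 1).
  by rewrite !Pu -mulmxDl -mulmxDr -id2 mulmx1 U2.
have dne : d 0 0 - d 0 1 != 0.
  rewrite subr_eq0; apply/negP => /eqP dd; apply: NT; exists (d 0 0).
  by rewrite Esum -dd -scalerDr -Isum scalemx1.
have dne' : d 0 1 - d 0 0 != 0 by rewrite -opprB oppr_eq0.
have u_neq0 b : u b != 0.
  apply: contra (delta_neq0 b) => /eqP H.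
  by rewrite -[delta_mx b 0]mul1mx -U1 -mulmxA -/(u b) H mulmx0.
exists (u 0), (u 1), (d 0 0 - d 0 1)^-1, (d 0 1), (d 0 1 - d 0 0)^-1, (d 0 0); split => //.
- rewrite /u dag_mul dagK dag_delta -(mulmxA _ M) (mulmxA M) U1 mul1mx.
  by rewrite mul_delta_mx_cond /= mulr0n.
- rewrite {1}Esum {1}Isum (scalerDr (d 0 1)) opprD addrACA -!scalerBl subrr scale0r addr0.
  by rewrite scalerA mulVf // scale1r.
- rewrite {1}Esum {1}Isum (scalerDr (d 0 0)) opprD addrACA -!scalerBl subrr scale0r add0r.
  by rewrite scalerA mulVf // scale1r.
Qed.

End Qubit.

(* Necessity: what a correct Alice-first protocol forces on the factors T_k
   of the states rho_k = T_k T_k^dag. *)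
Section ProtocolSplit.
Variable C : numClosedFieldType.

Lemma conj_gram d (A T : 'M[C]_d) : A *m (T *m dag T) *m dag A = (A *m T) *m dag (A *m T).
Proof. by rewrite dag_mul !mulmxA. Qed.

(* A complete measurement {A_i} preserves and reflects orthogonality:
   X^dag Y = sum_i (A_i X)^dag (A_i Y). *)
Lemma complete_orth d m (A : 'I_m -> 'M[C]_d) (X Y : 'M[C]_d) :
  \sum_i dag (A i) *m A i = 1%:M ->
  (forall i, dag (A i *m X) *m (A i *m Y) = 0) -> dag X *m Y = 0.
Proof.
move=> Hs H; rewrite -[Y]mul1mx -Hs mulmx_suml mulmx_sumr big1 // => i _.
by rewrite -(mulmxA (dag (A i))) mulmxA -dag_mul H.
Qed.

Lemma complete_kronA n m (K : 'I_m -> 'M[C]_2) :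
  \sum_i dag (K i) *m K i = 1%:M ->
  \sum_i dag (kron (K i) (1%:M : 'M[C]_n)) *m kron (K i) (1%:M : 'M[C]_n) = 1%:M.
Proof.
move=> H; rewrite (eq_bigr (fun i => kron (dag (K i) *m K i) (1%:M : 'M[C]_n))).
  by rewrite -kron_suml H kron11.
by move=> i _; rewrite dag_kron dag1 kron_mul mul1mx.
Qed.

Lemma complete_kronB n m (K : 'I_m -> 'M[C]_n) :
  \sum_i dag (K i) *m K i = 1%:M ->
  \sum_i dag (kron (1%:M : 'M[C]_2) (K i)) *m kron (1%:M : 'M[C]_2) (K i) = 1%:M.
Proof.
move=> H; rewrite (eq_bigr (fun i => kron (1%:M : 'M[C]_2) (dag (K i) *m K i))).
  by rewrite -kron_sumr H kron11.
by move=> i _; rewrite dag_kron dag1 kron_mul mul1mx.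
Qed.

Lemma correct_orthogonal n N (P : protocol C n N) : valid P -> forall k l, k != l ->
  forall Tk Tl : 'M[C]_(2 * n),
  outputs_correctly P (Tk *m dag Tk) k -> outputs_correctly P (Tl *m dag Tl) l ->
  dag Tk *m Tl = 0.
Proof.
elim: P => [j|m K next IH|m K next IH] /=.
- move=> _ k l kl Tk Tl [/gram_tr_eq0 ->|jk]; first by rewrite dag0 mul0mx.
  move=> [/gram_tr_eq0 ->|jl]; first by rewrite mulmx0.
  by move: kl; rewrite -jk -jl eqxx.
- move=> [Hs Hv] k l kl Tk Tl Hk Hl; apply: (complete_orth (complete_kronA n Hs)) => i.
  by apply: (IH i (Hv i) k l kl); rewrite -conj_gram.
- move=> [Hs Hv] k l kl Tk Tl Hk Hl; apply: (complete_orth (complete_kronB Hs)) => i.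
  by apply: (IH i (Hv i) k l kl); rewrite -conj_gram.
Qed.

Lemma trivial_meas_nonzero d m (K : 'I_m -> 'M[C]_d) : (0 < d)%N ->
  \sum_i dag (K i) *m K i = 1%:M -> ~ nontrivial_meas K ->
  exists i (c : C), c != 0 /\ dag (K i) *m K i = c%:M.
Proof.
move=> d0 Hs Hn; have /fin_all_exists [c Hc] : forall i, trivial_op (K i).
  by move=> i; apply: NNPP => Hi; apply: Hn; exists i.
have [i ci|Hall] := pickP (fun i => c i != 0); first by exists i, (c i).
have : (1%:M : 'M[C]_d) = 0.
  rewrite -Hs big1 // => i _; rewrite Hc; have /negbFE/eqP -> := Hall i.
  by apply/matrixP=> a b; rewrite !mxE mul0rn.
move/matrixP/(_ (Ordinal d0) (Ordinal d0)); rewrite !mxE eqxx /= => /eqP.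
by rewrite oner_eq0.
Qed.

Lemma trivial_op_dag d (K : 'M[C]_d) c : dag K *m K = c%:M -> c != 0 ->
  K *m dag K = c%:M.
Proof.
move=> Hc cnz.
have H1 : (c^-1 *: dag K) *m K = 1%:M by rewrite -scalemxAl Hc scale_scalar_mx mulVf.
have := mulmx1C H1; rewrite -scalemxAr => H2.
by rewrite -[K *m dag K]scale1r -(mulfV cnz) -scalerA H2 scalemx1.
Qed.

Lemma conj_kronA n (K X : 'M[C]_2) :
  dag (kron K (1%:M : 'M[C]_n)) *m kron X 1%:M *m kron K 1%:M
  = kron (dag K *m X *m K) 1%:M.
Proof. by rewrite dag_kron dag1 !kron_mul !mul1mx. Qed.

Lemma conj_kronB n (K : 'M[C]_n) (X : 'M[C]_2) :
  dag (kron (1%:M : 'M[C]_2) K) *m kron X 1%:M *m kron 1%:M K = kron X (dag K *m K).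
Proof. by rewrite dag_kron dag1 !kron_mul !mul1mx !mulmx1. Qed.

Definition block_orth n N (u : 'cV[C]_2) (T : 'I_N -> 'M[C]_(2 * n)) : Prop :=
  forall k l, k != l -> dag (T k) *m kron (u *m dag u) (1%:M : 'M[C]_n) *m T l = 0.

Definition alice_split n N (T : 'I_N -> 'M[C]_(2 * n)) : Prop :=
  exists u0 u1 : 'cV[C]_2,
    [/\ u0 != 0, u1 != 0, dag u0 *m u1 = 0, block_orth u0 T & block_orth u1 T].

Lemma block_orthZ n N (s : C) u (T : 'I_N -> 'M[C]_(2 * n)) :
  block_orth u T -> block_orth (s *: u) T.
Proof.
move=> g k l kl; rewrite dagZ -scalemxAr -scalemxAl scalerA kronZl.
by rewrite -scalemxAr -scalemxAl g // scaler0.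
Qed.

Lemma split_nonscalar n N (E : 'M[C]_2) (T : 'I_N -> 'M[C]_(2 * n)) :
  dag E = E -> ~ (exists c, E = c%:M) ->
  (forall k l, k != l -> dag (T k) *m T l = 0) ->
  (forall k l, k != l -> dag (T k) *m kron E (1%:M : 'M[C]_n) *m T l = 0) ->
  alice_split T.
Proof.
move=> HE NT O1 O2.
have [u0 [u1 [a0 [c0 [a1 [c1 [H0 H1 H2 P0 P1]]]]]]] := nonscalar_eigenbasis HE NT.
have affine (u : 'cV[C]_2) a c : u *m dag u = a *: (E - c *: 1%:M) -> block_orth u T.
  move=> Pu k l kl; rewrite Pu kronZl kronBl kronZl kron11.
  rewrite -scalemxAr -scalemxAl mulmxBr mulmxBl -scalemxAr -scalemxAl mulmx1.
  by rewrite O1 // O2 // scaler0 subrr scaler0.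
by exists u0, u1; split => //; [exact: affine P0 | exact: affine P1].
Qed.

(* A trivial operator K of Alice is proportional to a unitary; a split of the
   post-measurement family pulls back along K^dag. *)
Lemma split_pullbackA n N (K : 'M[C]_2) c (T : 'I_N -> 'M[C]_(2 * n)) :
  dag K *m K = c%:M -> c != 0 ->
  alice_split (fun k => kron K (1%:M : 'M[C]_n) *m T k) -> alice_split T.
Proof.
move=> Hc cnz [u0 [u1 [H0 H1 H2 G0 G1]]]; have KK := trivial_op_dag Hc cnz.
have nz (u : 'cV[C]_2) : u != 0 -> dag K *m u != 0.
  apply: contra => /eqP H; have : K *m dag K *m u = 0 by rewrite -mulmxA H mulmx0.
  by rewrite KK mul_scalar_mx => /eqP; rewrite scaler_eq0 (negbTE cnz).
have pull (u : 'cV[C]_2) :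
    block_orth u (fun k => kron K 1%:M *m T k) -> block_orth (dag K *m u) T.
  move=> Gu k l kl; move: (Gu k l kl); rewrite !dag_mul dagK !mulmxA.
  by rewrite -(mulmxA (dag K) u) -conj_kronA !mulmxA.
exists (dag K *m u0), (dag K *m u1); split; [exact: nz|exact: nz| |exact: pull|exact: pull].
by rewrite dag_mul dagK -mulmxA (mulmxA K) KK mul_scalar_mx -scalemxAr H2 scaler0.
Qed.

(* A trivial operator of Bob rescales every block by c. *)
Lemma split_pullbackB n N (K : 'M[C]_n) c (T : 'I_N -> 'M[C]_(2 * n)) :
  dag K *m K = c%:M -> c != 0 ->
  alice_split (fun k => kron (1%:M : 'M[C]_2) K *m T k) -> alice_split T.
Proof.
move=> Hc cnz [u0 [u1 [H0 H1 H2 G0 G1]]].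
have pull (u : 'cV[C]_2) : block_orth u (fun k => kron 1%:M K *m T k) -> block_orth u T.
  move=> Gu k l kl; have := Gu k l kl.
  rewrite dag_mul !mulmxA -(mulmxA (dag (T k)) (dag (kron 1%:M K))).
  rewrite -(mulmxA (dag (T k)) _ (kron 1%:M K)).
  rewrite conj_kronB Hc -[c%:M]scalemx1 kronZr -scalemxAr -scalemxAl => /eqP.
  by rewrite scaler_eq0 (negbTE cnz) => /eqP.
by exists u0, u1; split => //; apply: pull.
Qed.

Lemma alice_first_split n N : (0 < n)%N -> forall P : protocol C n N,
  alice_first P -> valid P -> forall T : 'I_N -> 'M[C]_(2 * n),
  (forall k, outputs_correctly P (T k *m dag (T k)) k) -> alice_split T.
Proof.
move=> n0; elim => [j|m K next IH|m K next IH] /=.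
- move=> _ _ T HT; have [u0 [u1 [H0 H1 H2]]] := std_basis C.
  have Z k l : k != l -> T k = 0 \/ T l = 0.
    move=> kl; case: (HT k) => [/gram_tr_eq0|jk]; first by left.
    case: (HT l) => [/gram_tr_eq0|jl]; first by right.
    by move: kl; rewrite -jk -jl eqxx.
  by exists u0, u1; split => // k l kl; case: (Z k l kl) => ->;
    rewrite ?dag0 ?mul0mx ?mulmx0.
- move=> Haf [Hs Hv] T HT.
  have [[i Hi]|Hn] := classic (nontrivial_meas K).
  + apply: (@split_nonscalar _ _ (dag (K i) *m K i)).
    * by rewrite dag_mul dagK.
    * by move=> [c Hc]; apply: Hi; exists c.
    * move=> k l kl; apply: (complete_orth (complete_kronA n Hs)) => j.
      by apply: (correct_orthogonal (Hv j) kl); rewrite -conj_gram.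
    * move=> k l kl; have -> : kron (dag (K i) *m K i) (1%:M : 'M[C]_n)
          = dag (kron (K i) 1%:M) *m kron (K i) 1%:M.
        by rewrite dag_kron dag1 kron_mul mul1mx.
      rewrite mulmxA -dag_mul -mulmxA; apply: (correct_orthogonal (Hv i) kl).
        by rewrite -conj_gram; exact: HT k i.
      by rewrite -conj_gram; exact: HT l i.
  + have [i [c [cnz Hc]]] := trivial_meas_nonzero (isT : (0 < 2)%N) Hs Hn.
    apply: (split_pullbackA Hc cnz); apply: (IH i).
    * by case: Haf => // -[j Hj]; exfalso; apply: Hn; exists j.
    * exact: Hv.
    * by move=> k; rewrite -conj_gram; exact: HT k i.
- move=> [Hn Haf] [Hs Hv] T HT.
  have [i [c [cnz Hc]]] := trivial_meas_nonzero n0 Hs Hn.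
  apply: (split_pullbackB Hc cnz); apply: (IH i (Haf i) (Hv i)).
  by move=> k; rewrite -conj_gram; exact: HT k i.
Qed.

End ProtocolSplit.

Definition orthogonal_components (C : numClosedFieldType) n N
    (rho : 'I_N -> 'M[C]_(2 * n)) (u0 u1 : 'cV[C]_2) : Prop :=
  forall (k l : 'I_N), k != l ->
  forall (psik psil : 'cV[C]_(2 * n)),
    in_supp (rho k) psik -> in_supp (rho l) psil ->
  forall (a0 a1 b0 b1 : 'cV[C]_n),
    psik = kron u0 a0 + kron u1 a1 ->
    psil = kron u0 b0 + kron u1 b1 ->
    dag a0 *m b0 = 0 /\ dag a1 *m b1 = 0.

Section Forward.
Variable C : numClosedFieldType.

Lemma density_dim_pos n (rho : 'M[C]_(2 * n)) : density rho -> (0 < n)%N.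
Proof.
move=> [_ Htr]; case: (posnP n) => // n0; move: rho Htr; rewrite n0 => r.
by rewrite /mxtrace big_ord0 => /eqP; rewrite eq_sym oner_eq0.
Qed.

Lemma block_orth_components n N (u : 'cV[C]_2) (T : 'I_N -> 'M[C]_(2 * n)) k l :
  k != l -> block_orth u T -> forall w z : 'cV[C]_(2 * n),
  dag (pbra n u *m (T k *m dag (T k) *m w)) *m (pbra n u *m (T l *m dag (T l) *m z)) = 0.
Proof.
move=> kl g w z.
have -> : dag (pbra n u *m (T k *m dag (T k) *m w)) *m (pbra n u *m (T l *m dag (T l) *m z))
  = dag w *m T k *m (dag (T k) *m kron (u *m dag u) 1%:M *m T l) *m dag (T l) *m z.
  rewrite !dag_mul dagK !mulmxA -(mulmxA _ (dag (pbra n u)) (pbra n u)) pket_pbra.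
  by rewrite ?mulmxA.
by rewrite g // mulmx0 !mul0mx.
Qed.

(* Necessity: normalising the directions of the split gives the basis. *)
Lemma forward n N (HN : (0 < N)%N) (rho : 'I_N -> 'M[C]_(2 * n)) :
  (forall k, density (rho k)) ->
  (exists P : protocol C n N, alice_first P /\ perfectly_discriminates P rho) ->
  exists u0 u1 : 'cV[C]_2, orthonormal2 u0 u1 /\ orthogonal_components rho u0 u1.
Proof.
move=> Hdens [P [Haf [Hval Hout]]].
have n0 := density_dim_pos (Hdens (Ordinal HN)).
have /fin_all_exists [T HT] : forall k, exists T : 'M[C]_(2 * n), rho k = T *m dag T.
  by move=> k; apply: psd_factor; case: (Hdens k).
have [v0 [v1 [nz0 nz1 o01 g0 g1]]] : alice_split T.
  by apply: (alice_first_split n0 Haf Hval) => k; rewrite -HT.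
have [s0 E0] := normalize nz0; have [s1 E1] := normalize nz1.
have ON : orthonormal2 (s0 *: v0) (s1 *: v1).
  by do 2!split => //; rewrite dagZ -scalemxAl -scalemxAr o01 !scaler0.
exists (s0 *: v0), (s1 *: v1); split => // k l kl psik psil Hk Hl a0 a1 b0 b1 Ek El.
have [w Ew] := in_supp_inv Hk; have [z Ez] := in_supp_inv Hl.
have [Ea0 Ea1] := orthonormal2_coord a0 a1 ON; rewrite -Ek Ew HT in Ea0 Ea1.
have [Eb0 Eb1] := orthonormal2_coord b0 b1 ON; rewrite -El Ez HT in Eb0 Eb1.
rewrite -Ea0 -Ea1 -Eb0 -Eb1.
by split; apply: block_orth_components => //; apply: block_orthZ.
Qed.

End Forward.

(* Sufficiency: Alice measures in the good basis, then Bob separates the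
   mutually orthogonal ranges of his conditional states. *)
Section Backward.
Variable C : numClosedFieldType.

Lemma orth_of_vectors m n p (X : 'M[C]_(m, n)) (Y : 'M[C]_(m, p)) :
  (forall (w : 'cV[C]_n) (z : 'cV[C]_p), dag (X *m w) *m (Y *m z) = 0) -> dag X *m Y = 0.
Proof.
move=> H; apply/matrixP=> i j; have := H (delta_mx i 0) (delta_mx j 0).
rewrite dag_mul dag_delta mulmxA -mulmxA -rowE -colE => /matrixP/(_ 0 0).
rewrite [RHS]mxE => H2; rewrite [RHS]mxE; apply: etrans _ H2.
by rewrite !mxE; apply: eq_bigr => k _; rewrite !mxE.
Qed.

(* Bob can perfectly tell apart states with mutually orthogonal ranges B_k:
   a complete measurement whose outcome i in 'I_N.+1 annihilates every B_k
   unless i is k (the last outcome, ord_max, annihilates all of them). *)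
Lemma orthogonal_ranges_measurement n p N (B : 'I_N -> 'M[C]_(n, p)) :
  (forall j k, j != k -> dag (B j) *m B k = 0) ->
  exists K : 'I_N.+1 -> 'M[C]_n,
    \sum_i dag (K i) *m K i = 1%:M /\
    forall i k, unlift ord_max i != Some k -> K i *m B k = 0.
Proof.
move=> Orth; have /fin_all_exists [Q HQ] : forall j, exists Q : 'M[C]_n,
    [/\ exists Z : 'M[C]_(p, n), Q = B j *m Z, dag Q = Q, Q *m Q = Q & Q *m B j = B j].
  move=> j; have [Q [Z [-> ? ? ?]]] := range_projection (B j).
  by exists (B j *m Z); split => //; exists Z.
have QH j : dag (Q j) = Q j by case: (HQ j).
have QB0 j k : j != k -> Q j *m B k = 0.
  move=> jk; have [[Z EZ] HD _ _] := HQ j.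
  by rewrite -HD {1}EZ dag_mul -mulmxA Orth // mulmx0.
have QQ0 j k : j != k -> Q j *m Q k = 0.
  by move=> jk; have [[Z ->] _ _ _] := HQ k; rewrite mulmxA QB0 // mul0mx.
pose S := \sum_j Q j.
have SB k : S *m B k = B k.
  rewrite /S mulmx_suml (bigD1 k) //= big1 ?addr0; first by case: (HQ k).
  by move=> j jk; rewrite QB0.
have SS : S *m S = S.
  rewrite {1}/S mulmx_suml; apply: eq_bigr => j _.
  rewrite /S mulmx_sumr (bigD1 j) //= big1 ?addr0; first by case: (HQ j).
  by move=> k kj; rewrite QQ0 // eq_sym.
have SH : dag S = S by rewrite /S dag_sum; apply: eq_bigr => j _; rewrite QH.
pose Kopt (o : option 'I_N) := if o is Some j then Q j else 1%:M - S.
exists (fun i => Kopt (unlift ord_max i)); split.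
  rewrite (bigD1_ord ord_max) //= unlift_none.
  rewrite (eq_bigr (fun j => Q j)); last first.
    by move=> j _; rewrite liftK /= QH; case: (HQ j).
  have RR : dag (1%:M - S) *m (1%:M - S) = 1%:M - S.
    by rewrite dagB dag1 SH mulmxBl mul1mx mulmxBr mulmx1 SS subrr subr0.
  by rewrite -/S [Kopt None]/= RR subrK.
move=> i k; case: (unlift ord_max i) => [j|] /= jk.
  by rewrite QB0 //; apply: contraNneq jk => ->.
by rewrite mulmxBl mul1mx SB subrr.
Qed.

Lemma projector_nontrivial (u0 u1 : 'cV[C]_2) :
  orthonormal2 u0 u1 -> ~ trivial_op (u0 *m dag u0).
Proof.
move=> [E0 [E1 O]] [c]; rewrite unit_projector // => Hc.
have u_neq0 (v : 'cV[C]_2) : dag v *m v = 1%:M -> v != 0.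
  by move=> Ev; rewrite -dag_vec_eq0 Ev matrix_nonzero1.
have c0 : c = 0.
  have : c *: u1 = 0 by rewrite -mul_scalar_mx -Hc -mulmxA O mulmx0.
  by move/eqP; rewrite scaler_eq0 (negbTE (u_neq0 _ E1)) orbF => /eqP.
apply: (negP (u_neq0 _ E0)); apply/eqP.
by rewrite -[u0]mulmx1 -E0 mulmxA Hc c0 mul_scalar_mx scale0r.
Qed.

Lemma alice_then_bob n (u : 'cV[C]_2) (K : 'M[C]_n) :
  kron (1%:M : 'M[C]_2) K *m kron (u *m dag u) 1%:M = dag (pbra n u) *m K *m pbra n u.
Proof.
rewrite kron_mul mul1mx mulmx1 -mulmxA -pbra_kron1 mulmxA pket_pbra kron_mul.
by rewrite mulmx1 mul1mx.
Qed.

Lemma annihilated_branch n (u : 'cV[C]_2) (K : 'M[C]_n) (rho : 'M[C]_(2 * n)) :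
  K *m (pbra n u *m rho) = 0 ->
  kron 1%:M K *m (kron (u *m dag u) 1%:M *m rho *m dag (kron (u *m dag u) 1%:M))
    *m dag (kron 1%:M K) = 0.
Proof.
move=> KB; rewrite !mulmxA alice_then_bob -(mulmxA _ (pbra n u) rho).
by rewrite -(mulmxA _ K) KB mulmx0 !mul0mx.
Qed.

Lemma conditional_ranges_orth n N (rho : 'I_N -> 'M[C]_(2 * n)) (u0 u1 : 'cV[C]_2) :
  (forall k, density (rho k)) -> orthonormal2 u0 u1 -> orthogonal_components rho u0 u1 ->
  forall k l, k != l ->
    dag (pbra n u0 *m rho k) *m (pbra n u0 *m rho l) = 0 /\
    dag (pbra n u1 *m rho k) *m (pbra n u1 *m rho l) = 0.
Proof.
move=> Hdens ON Hc k l kl.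
have comp (w z : 'cV[C]_(2 * n)) :
    dag (pbra n u0 *m (rho k *m w)) *m (pbra n u0 *m (rho l *m z)) = 0 /\
    dag (pbra n u1 *m (rho k *m w)) *m (pbra n u1 *m (rho l *m z)) = 0.
  exact: (Hc k l kl _ _ (in_supp_range w (Hdens k).1) (in_supp_range z (Hdens l).1)
    _ _ _ _ (orthonormal2_decomp _ ON) (orthonormal2_decomp _ ON)).
by split; apply: orth_of_vectors => w z; rewrite -!mulmxA; case: (comp w z).
Qed.

(* Sufficiency: the protocol "Alice measures {u_b u_b^dag}, then Bob measures
   the projections onto the ranges of <u_b|_A rho_k and announces k". *)
Lemma backward n N (HN : (0 < N)%N) (rho : 'I_N -> 'M[C]_(2 * n)) :
  (forall k, density (rho k)) ->
  (exists u0 u1 : 'cV[C]_2, orthonormal2 u0 u1 /\ orthogonal_components rho u0 u1) ->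
  exists P : protocol C n N, alice_first P /\ perfectly_discriminates P rho.
Proof.
move=> Hdens [u0 [u1 [ON Hc]]].
pose u (b : 'I_2) := if b == 0 then u0 else u1.
pose Bm (b : 'I_2) k := pbra n (u b) *m rho k.
have /fin_all_exists [K HK] : forall b, exists K : 'I_N.+1 -> 'M[C]_n,
    \sum_i dag (K i) *m K i = 1%:M /\
    forall i k, unlift ord_max i != Some k -> K i *m Bm b k = 0.
  move=> b; apply: orthogonal_ranges_measurement => k l kl.
  have [O0 O1] := conditional_ranges_orth Hdens ON Hc kl.
  by rewrite /Bm /u; case: (ord2_cases b) => ->.
pose guess (i : 'I_N.+1) := odflt (Ordinal HN) (unlift ord_max i).
exists (MeasA (fun b => u b *m dag (u b))
          (fun b => MeasB (K b) (fun i => Output C n (guess i)))).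
split; first by left; exists 0; rewrite /u eqxx; exact: projector_nontrivial ON.
split.
  split=> [|b]; last by split=> //; case: (HK b).
  rewrite -(orthonormal2_complete ON) !big_ord_recr big_ord0 /= add0r /u /=.
  by case: ON => [E0 [E1 _]]; rewrite !unit_projector.
move=> k b i /=; have [_ KB] := HK b; rewrite /guess.
case: (eqVneq (unlift ord_max i) (Some k)) => [-> | ik]; first by right.
by left; rewrite annihilated_branch ?mxtrace0 //; apply: KB.
Qed.

End Backward.

Theorem theorem1 (C : numClosedFieldType) (n N : nat) (HN : (0 < N)%N)
  (rho : 'I_N -> 'M[C]_(2 * n))
  (Hdens : forall k, density (rho k))
  (Horth : forall k l, k != l -> \tr (rho k *m rho l) = 0) :
  (exists P : protocol C n N, alice_first P /\ perfectly_discriminates P rho)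
  <->
  (exists u0 u1 : 'cV[C]_2,
     (dag u0 *m u0 = 1%:M /\ dag u1 *m u1 = 1%:M /\ dag u0 *m u1 = 0) /\
     forall (k l : 'I_N), k != l ->
     forall (psik psil : 'cV[C]_(2 * n)),
       in_supp (rho k) psik -> in_supp (rho l) psil ->
     forall (a0 a1 b0 b1 : 'cV[C]_n),
       psik = kron u0 a0 + kron u1 a1 ->
       psil = kron u0 b0 + kron u1 b1 ->
       dag a0 *m b0 = 0 /\ dag a1 *m b1 = 0).
Proof.
split.
- exact: forward.
- exact: backward.
Qed.
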